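(* Define $\alpha,\beta:[0,2\pi]\to\mathbb{R}^3$ and $\gamma:[0,\pi]\to\mathbb{R}^3$ by $\alpha(t)=(\cos t,\sin t,1)$, $\beta(t)=(\cos t,\sin t,-1)$, $\gamma(t)=\big(2\cos(2t)-1,\ 2\sin(2t),\ \tfrac98\cos t-\tfrac18\cos(3t)\big)$, and let $C=\operatorname{conv}\big(\alpha([0,2\pi])\cup\beta([0,2\pi])\cup\gamma([0,\pi])\big)\subseteq\mathbb{R}^3$. Then the cone $\mathcal{K}=\operatorname{cone}(C\times\{1\})\subseteq\mathbb{R}^4$ is not amenable.
   Context: $\operatorname{cone}S=\{\lambda x:x\in S,\lambda\ge0\}$. A face of a closed convex cone $\mathcal{K}$ is a closed convex subset $\mathcal{F}\subseteq\mathcal{K}$ such that whenever $x,y\in\mathcal{K}$ and $\alpha x+(1-\alpha)y\in\mathcal{F}$ for some $\alpha\in(0,1)$, then $x,y\in\mathcal{F}$. $\mathcal{K}$ is amenable if for every face $\mathcal{F}$ there exists $\kappa>0$ with $\operatorname{dist}(x,\mathcal{F})\le\kappa\operatorname{dist}(x,\mathcal{K})$ for all $x\in\operatorname{span}\mathcal{F}$. *)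

From HB Require Import structures.
From mathcomp Require Import all_boot all_order all_algebra.
From mathcomp Require Import all_classical all_reals all_analysis.
Set Implicit Arguments. Unset Strict Implicit. Unset Printing Implicit Defensive.
Import Order.TTheory GRing.Theory Num.Theory numFieldNormedType.Exports.
Local Open Scope classical_set_scope.
Local Open Scope ring_scope.

Section Defs.
Variable R : realType.

Definition enorm (n : nat) (x : 'rV[R]_n) : R :=
  Num.sqrt (\sum_(i < n) (x ord0 i) ^+ 2).
Definition edist (n : nat) (x : 'rV[R]_n) (A : set 'rV[R]_n) : R :=
  inf [set enorm (x - y) | y in A].

Definition conv (n : nat) (S : set 'rV[R]_n) : set 'rV[R]_n :=
  [set x | exists m (p : 'I_m -> 'rV[R]_n) (w : 'I_m -> R),
     (forall i, S (p i)) /\ (forall i, 0 <= w i) /\ \sum_(i < m) w i = 1 /\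
     x = \sum_(i < m) w i *: p i].

(* linear span: all finite linear combinations (span of the empty set is {0}) *)
Definition span (n : nat) (S : set 'rV[R]_n) : set 'rV[R]_n :=
  [set x | exists m (p : 'I_m -> 'rV[R]_n) (c : 'I_m -> R),
     (forall i, S (p i)) /\ x = \sum_(i < m) c i *: p i].

Definition cone (n : nat) (S : set 'rV[R]_n) : set 'rV[R]_n :=
  [set y | exists l x, 0 <= l /\ S x /\ y = l *: x].

Definition convex_set_of (n : nat) (S : set 'rV[R]_n) : Prop :=
  forall x y (a : R), S x -> S y -> 0 <= a <= 1 -> S (a *: x + (1 - a) *: y).

Definition is_face (n : nat) (K F : set 'rV[R]_n) : Prop :=
  F !=set0 /\ F `<=` K /\ closed F /\ convex_set_of F /\
  (forall x y (a : R), K x -> K y -> 0 < a < 1 ->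
     F (a *: x + (1 - a) *: y) -> F x /\ F y).

Definition amenable (n : nat) (K : set 'rV[R]_n) : Prop :=
  forall F, is_face K F -> exists kappa : R, 0 < kappa /\
    forall x, span F x -> edist x F <= kappa * edist x K.

Definition vec3 (a b c : R) : 'rV[R]_3 :=
  \row_(i < 3) (if (i : nat) == 0%N then a else if (i : nat) == 1%N then b else c).

Definition lift1 (C : set 'rV[R]_3) : set 'rV[R]_4 :=
  [set row_mx c (const_mx 1 : 'rV[R]_1) | c in C].

Definition alpha (t : R) : 'rV[R]_3 := vec3 (cos t) (sin t) 1.
Definition beta (t : R) : 'rV[R]_3 := vec3 (cos t) (sin t) (-1).
Definition gamma (t : R) : 'rV[R]_3 :=
  vec3 (2 * cos (2 * t) - 1) (2 * sin (2 * t))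
       (9 / 8 * cos t - 1 / 8 * cos (3 * t)).

Definition C_set : set 'rV[R]_3 :=
  conv (alpha @` `[0, 2 * pi] `|` beta @` `[0, 2 * pi] `|` gamma @` `[0, pi]).

Definition K_cone : set 'rV[R]_4 := cone (lift1 C_set).
End Defs.

From Pilot Require Import Defs.
From HB Require Import structures.
From mathcomp Require Import all_boot all_order all_algebra.
From mathcomp Require Import all_classical all_reals all_analysis.
From mathcomp Require Import ring lra.
Set Implicit Arguments. Unset Strict Implicit. Unset Printing Implicit Defensive.
Import Order.TTheory GRing.Theory Num.Theory numFieldNormedType.Exports.
Local Open Scope classical_set_scope.
Local Open Scope ring_scope.

(* C lies in the half-space z <= 1 and meets the plane z = 1 exactly in the
   unit disk D = {(u, v, 1) : u^2 + v^2 <= 1}, so the cone F over D x {1} is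
   a face of K, and span F is the hyperplane y_2 = y_3.  Near t = 0 the curve
   gamma runs just below the rim point (1, 0, 1) of D: writing c = cos t and
   s = sin t, its height deficit 1 - gamma_z(t) = (1 - c)^2 (2 + c) / 2 is of
   order t^4, while its horizontal shadow (gamma_x, gamma_y) lies at distance
   about s^2 ~ t^2 outside the unit disk.  Lifting gamma(t) to height 1 thus
   gives points of span F whose distance to F is at least s^2 but whose
   distance to K is O(t^4), which rules out any amenability constant. *)

Section Generalities.
Variable R : realType.

Lemma ler_of_sqr (x y : R) : 0 <= y -> x ^+ 2 <= y ^+ 2 -> x <= y.
Proof. by move=> y_ge0 le_sqr; nra. Qed.

Lemma ler_sqrt_of_sqr (x y : R) : 0 <= x -> x ^+ 2 <= y -> x <= Num.sqrt y.
Proof. by move=> x_ge0 le_sqr; rewrite -(ger0_norm x_ge0) -sqrtr_sqr ler_wsqrtr. Qed.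

Lemma cauchy_schwarz2 (p1 q1 p2 q2 : R) :
  (p1 * p2 + q1 * q2) ^+ 2 <= (p1 ^+ 2 + q1 ^+ 2) * (p2 ^+ 2 + q2 ^+ 2).
Proof. by have := sqr_ge0 (p1 * q2 - q1 * p2); nra. Qed.

Lemma lorentz_cone_convex (a b p1 q1 r1 p2 q2 r2 : R) : 0 <= a -> 0 <= b ->
  p1 ^+ 2 + q1 ^+ 2 <= r1 ^+ 2 -> 0 <= r1 ->
  p2 ^+ 2 + q2 ^+ 2 <= r2 ^+ 2 -> 0 <= r2 ->
  (a * p1 + b * p2) ^+ 2 + (a * q1 + b * q2) ^+ 2 <= (a * r1 + b * r2) ^+ 2.
Proof.
move=> a_ge0 b_ge0 le1 r1_ge0 le2 r2_ge0.
have inner_le : p1 * p2 + q1 * q2 <= r1 * r2.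
  apply: ler_of_sqr; first exact: mulr_ge0.
  apply: le_trans (cauchy_schwarz2 p1 q1 p2 q2) _.
  by rewrite exprMn ler_pM // addr_ge0 // sqr_ge0.
have ab_ge0 : 0 <= 2 * (a * b) by rewrite !mulr_ge0.
have := ler_wpM2l ab_ge0 inner_le.
have := ler_wpM2l (sqr_ge0 a) le1; have := ler_wpM2l (sqr_ge0 b) le2.
by rewrite !sqrrD !exprMn; lra.
Qed.

(* Nonnegativity of the variance. *)
Lemma sqr_convex_comb_le m (w a : 'I_m -> R) :
  (forall i, 0 <= w i) -> \sum_i w i = 1 ->
  (\sum_i w i * a i) ^+ 2 <= \sum_i w i * a i ^+ 2.
Proof.
move=> w_ge0 w_sum1; set A := \sum_i w i * a i.
have : 0 <= \sum_i w i * (a i - A) ^+ 2.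
  by apply: sumr_ge0 => i _; rewrite mulr_ge0 ?sqr_ge0.
rewrite (eq_bigr (fun i => w i * a i ^+ 2 - A *+ 2 * (w i * a i) + A ^+ 2 * w i));
  last by move=> i _; ring.
by rewrite big_split sumrB /= -!mulr_sumr w_sum1 -/A; lra.
Qed.

Lemma cos_mulr3n (t : R) : cos (t *+ 3) = 4 * cos t ^+ 3 - 3 * cos t.
Proof.
rewrite mulrSr cosD cos_mulr2n sin_mulr2n.
have -> : (cos t ^+ 2 *+ 2 - 1) * cos t - cos t * sin t *+ 2 * sin t =
  4 * cos t ^+ 3 - 3 * cos t + 2 * cos t * (1 - cos t ^+ 2 - sin t ^+ 2) by ring.
by rewrite -sin2cos2 subrr mulr0 addr0.
Qed.

Lemma closed_le_fun (T : topologicalType) (f g : T -> R) :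
  continuous f -> continuous g -> closed [set x | f x <= g x].
Proof.
move=> f_cont g_cont.
have -> : [set x | f x <= g x] = (g - f) @^-1` [set r | 0 <= r].
  by apply/seteqP; split => x /=; rewrite subr_ge0.
apply: (preimage_closed _ (@closed_ge R 0)) => x _.
exact: (continuousB (g_cont x) (f_cont x)).
Qed.

Lemma closed_eq_fun (T : topologicalType) (f g : T -> R) :
  continuous f -> continuous g -> closed [set x | f x = g x].
Proof.
move=> f_cont g_cont.
have -> : [set x | f x = g x] = [set x | f x <= g x] `&` [set x | g x <= f x].
  by apply/seteqP; split => x /=; [move=> -> | move=> /andP/le_anti].
by apply: closedI; exact: closed_le_fun.
Qed.

Variable n : nat.
Implicit Types (x y : 'rV[R]_n) (A S : set 'rV[R]_n).

Lemma sub_conv S : S `<=` Defs.conv S.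
Proof.
move=> x Sx; exists 1%N, (fun=> x), (fun=> 1).
by rewrite !big_ord1 scale1r.
Qed.

Lemma conv2 S x y (l : R) : S x -> S y -> 0 <= l <= 1 ->
  Defs.conv S (l *: x + (1 - l) *: y).
Proof.
move=> Sx Sy /andP[l_ge0 l_le1].
exists 2%N, (fun i : 'I_2 => if i == ord0 then x else y),
  (fun i : 'I_2 => if i == ord0 then l else 1 - l).
rewrite !big_ord_recr !big_ord0 /= !add0r; split; first by move=> i; case: ifP.
by split; [move=> i; case: ifP; lra | split; [ring | ]].
Qed.

Lemma sub_cone S : S `<=` cone S.
Proof. by move=> x Sx; exists 1, x; rewrite scale1r. Qed.

Lemma edist_le_enorm x A y : A y -> Defs.edist x A <= enorm (x - y).
Proof.
move=> Ay; apply: inf_lbound; last by exists y.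
by exists 0 => _ [z _ <-]; exact: sqrtr_ge0.
Qed.

Lemma le_edist x A r : A !=set0 ->
  (forall y, A y -> r <= enorm (x - y)) -> r <= Defs.edist x A.
Proof.
move=> [y Ay] r_le; apply: lb_le_inf; first by exists (enorm (x - y)), y.
by move=> _ [z Az <-]; exact: r_le.
Qed.

Lemma sum_scale_coord m (w : 'I_m -> R) (p : 'I_m -> 'rV[R]_n) j :
  (\sum_i w i *: p i) ord0 j = \sum_i w i * p i ord0 j.
Proof. by rewrite summxE; apply: eq_bigr => i _; rewrite mxE. Qed.

Lemma coordD x y j : (x + y) ord0 j = x ord0 j + y ord0 j.
Proof. by rewrite mxE. Qed.

Lemma coordB x y j : (x - y) ord0 j = x ord0 j - y ord0 j.
Proof. by rewrite !mxE. Qed.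

Lemma coordZ (a : R) x j : (a *: x) ord0 j = a * x ord0 j.
Proof. by rewrite mxE. Qed.

Lemma not_amenable_of_face_gap (K F : set 'rV[R]_n) : is_face K F ->
  (forall kappa, 0 < kappa ->
     exists2 x, Defs.span F x & kappa * Defs.edist x K < Defs.edist x F) ->
  ~ amenable K.
Proof.
move=> faceF gap /(_ F faceF) [kappa [kappa_gt0 bound]].
have [x span_x lt_dist] := gap kappa kappa_gt0.
by have := bound x span_x; lra.
Qed.

End Generalities.

Section TopFace.
Variable R : realType.

Definition i0 : 'I_4 := @Ordinal 4 0 isT.
Definition i1 : 'I_4 := @Ordinal 4 1 isT.
Definition i2 : 'I_4 := @Ordinal 4 2 isT.
Definition i3 : 'I_4 := @Ordinal 4 3 isT.
Definition k0 : 'I_3 := @Ordinal 3 0 isT.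
Definition k1 : 'I_3 := @Ordinal 3 1 isT.
Definition k2 : 'I_3 := @Ordinal 3 2 isT.

Implicit Types (t : R) (c : 'rV[R]_3) (x y z : 'rV[R]_4).

Local Notation hom c := (row_mx c (const_mx 1 : 'rV[R]_1)).

Lemma ord4_cases (j : 'I_4) : [\/ j = i0, j = i1, j = i2 | j = i3].
Proof.
by case: j => [[|[|[|[|//]]]] lt_j4]; [constructor 1|constructor 2|constructor 3|constructor 4];
  apply: val_inj.
Qed.

Lemma sum_ord4 (f : 'I_4 -> R) : \sum_i f i = f i0 + f i1 + f i2 + f i3.
Proof.
rewrite !big_ord_recr big_ord0 /= add0r.
by congr (_ + _ + _ + _); congr f; apply: val_inj.
Qed.

Lemma enorm4 (y : 'rV[R]_4) :
  enorm y = Num.sqrt (y ord0 i0 ^+ 2 + y ord0 i1 ^+ 2 + y ord0 i2 ^+ 2 + y ord0 i3 ^+ 2).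
Proof. by rewrite /enorm sum_ord4. Qed.

Lemma vec3_0 (a b c : R) : vec3 a b c ord0 k0 = a. Proof. by rewrite mxE. Qed.
Lemma vec3_1 (a b c : R) : vec3 a b c ord0 k1 = b. Proof. by rewrite mxE. Qed.
Lemma vec3_2 (a b c : R) : vec3 a b c ord0 k2 = c. Proof. by rewrite mxE. Qed.

Lemma hom_0 (c : 'rV[R]_3) : hom c ord0 i0 = c ord0 k0.
Proof. by rewrite (_ : i0 = lshift 1 k0) ?row_mxEl //; apply: val_inj. Qed.
Lemma hom_1 (c : 'rV[R]_3) : hom c ord0 i1 = c ord0 k1.
Proof. by rewrite (_ : i1 = lshift 1 k1) ?row_mxEl //; apply: val_inj. Qed.
Lemma hom_2 (c : 'rV[R]_3) : hom c ord0 i2 = c ord0 k2.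
Proof. by rewrite (_ : i2 = lshift 1 k2) ?row_mxEl //; apply: val_inj. Qed.
Lemma hom_3 (c : 'rV[R]_3) : hom c ord0 i3 = 1.
Proof. by rewrite (_ : i3 = rshift 3 ord0) ?row_mxEr ?mxE //; apply: val_inj. Qed.

Definition coordE := (hom_0, hom_1, hom_2, hom_3, vec3_0, vec3_1, vec3_2).

Lemma gammaE t : gamma t =
  vec3 (4 * cos t ^+ 2 - 3) (4 * sin t * cos t) ((3 * cos t - cos t ^+ 3) / 2).
Proof.
rewrite /gamma [2 * t]mulr_natl [3 * t]mulr_natl cos_mulr2n sin_mulr2n cos_mulr3n.
by congr vec3; field; rewrite ?pnatr_eq0.
Qed.

Lemma one_sub_gamma_z t :
  1 - gamma t ord0 k2 = (1 - cos t) ^+ 2 * (2 + cos t) / 2.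
Proof. by rewrite gammaE vec3_2; field; rewrite ?pnatr_eq0. Qed.

Definition under_top_disk (c : 'rV[R]_3) : Prop :=
  c ord0 k2 <= 1 /\ (c ord0 k2 = 1 -> c ord0 k0 ^+ 2 + c ord0 k1 ^+ 2 <= 1).

Lemma gamma_under_top_disk t : under_top_disk (gamma t).
Proof.
have cos_ge_N1 := cos_geN1 t.
have deficit_ge0 : 0 <= 1 - gamma t ord0 k2.
  by rewrite one_sub_gamma_z divr_ge0 // mulr_ge0 ?sqr_ge0 //; lra.
split; first lra.
move=> top; have : (1 - cos t) ^+ 2 * (2 + cos t) / 2 = 0.
  by rewrite -one_sub_gamma_z top subrr.
move=> /eqP; rewrite !mulf_eq0 invr_eq0 pnatr_eq0 orbF orbb subr_eq0.
move=> /orP[/eqP cos1|/eqP]; last lra.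
rewrite gammaE vec3_0 vec3_1 -cos1 (_ : sin t = 0); first by lra.
by apply/eqP; rewrite -sqrf_eq0 sin2cos2 -cos1 expr1n subrr.
Qed.

Lemma C_under_top_disk c : @C_set R c -> under_top_disk c.
Proof.
move=> [m [p [w [p_gen [w_ge0 [w_sum1 ->]]]]]].
have p_under i : under_top_disk (p i).
  case: (p_gen i) => [[|]|] [t _ <-]; last exact: gamma_under_top_disk.
  - by rewrite /under_top_disk !vec3_0 !vec3_1 !vec3_2 cos2Dsin2.
  - by rewrite /under_top_disk vec3_2; split=> //; lra.
rewrite /under_top_disk !sum_scale_coord.
have z_le1 : \sum_i w i * p i ord0 k2 <= 1.
  by rewrite -w_sum1; apply: ler_sum => i _; rewrite ler_piMr //; case: (p_under i).
split=> // z_eq1.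
have slack_ge0 i : 0 <= w i * (1 - p i ord0 k2).
  by rewrite mulr_ge0 // subr_ge0; case: (p_under i).
have slack0 : \sum_i w i * (1 - p i ord0 k2) = 0.
  under eq_bigr do rewrite mulrBr mulr1.
  by rewrite sumrB w_sum1 z_eq1 subrr.
have xy_le i : w i * (p i ord0 k0 ^+ 2 + p i ord0 k1 ^+ 2) <= w i.
  have [->|w_neq0] := eqVneq (w i) 0; first by rewrite mul0r.
  have /eqP := psumr_eq0P (fun j _ => slack_ge0 j) slack0 (i := i) isT.
  rewrite mulf_eq0 (negbTE w_neq0) subr_eq0 => /eqP/esym top.
  by rewrite ler_piMr //; case: (p_under i) => _ /(_ top).
apply: le_trans (lerD (sqr_convex_comb_le _ w_ge0 w_sum1)
                      (sqr_convex_comb_le _ w_ge0 w_sum1)) _.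
by rewrite -big_split -w_sum1; apply: ler_sum => i _ /=; rewrite -mulrDr.
Qed.

Lemma chord_param (v r : R) : v ^+ 2 <= r ^+ 2 -> 0 <= r ->
  exists2 l, 0 <= l <= 1 & v = l * r + (1 - l) * - r.
Proof.
move=> le_sqr r_ge0; have [r0|r_neq0] := eqVneq r 0.
  exists 0; first by rewrite lexx ler01.
  by move: le_sqr; rewrite r0 expr0n /=; nra.
have r_gt0 : 0 < r by rewrite lt_def r_neq0.
have [v_geN v_le] : - r <= v /\ v <= r by split; nra.
have q_le1 : v / r <= 1 by rewrite ler_pdivrMr ?mul1r.
have q_geN1 : -1 <= v / r by rewrite ler_pdivlMr // mulN1r.
exists ((1 + v / r) / 2); first by apply/andP; split; lra.
by field.
Qed.

Lemma top_disk_sub_C u v : u ^+ 2 + v ^+ 2 <= 1 -> @C_set R (vec3 u v 1).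
Proof.
move=> in_disk.
have u2_le1 : u ^+ 2 <= 1 by have := sqr_ge0 v; lra.
have u_bound : -1 <= u <= 1 by apply/andP; split; nra.
have [/andP[th_ge0 th_le_pi] cos_th] := acos_def u_bound.
set th := acos u in th_ge0 th_le_pi cos_th.
set r := Num.sqrt (1 - u ^+ 2).
have sin_th : sin th = r by rewrite sin_acos.
have r_ge0 : 0 <= r := sqrtr_ge0 _.
have v_le_r : v ^+ 2 <= r ^+ 2 by rewrite sqr_sqrtr ?subr_ge0 //; lra.
(* (u, r, 1) and (u, -r, 1) are the points alpha th and alpha (2 pi - th). *)
have [l l01 ->] := chord_param v_le_r r_ge0.
have pi_gt0 := pi_gt0 R.
have -> : vec3 u (l * r + (1 - l) * - r) 1 =
    l *: alpha th + (1 - l) *: alpha (2 * pi - th).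
  rewrite /alpha cosB sinB [2 * pi]mulr_natl cos2pi sin2pi cos_th sin_th.
  by apply/rowP => j; rewrite !mxE; case: ifP => _; [|case: ifP => _]; ring.
by apply: conv2 l01; left; left; [exists th | exists (2 * pi - th)] => //;
  rewrite /= in_itv /=; apply/andP; split; lra.
Qed.

Lemma K_cone_top_bound z : @K_cone R z ->
  [/\ z ord0 i2 <= z ord0 i3, 0 <= z ord0 i3 &
      z ord0 i2 = z ord0 i3 -> z ord0 i0 ^+ 2 + z ord0 i1 ^+ 2 <= z ord0 i3 ^+ 2].
Proof.
move=> [l [_ [l_ge0 [[c Cc <-] ->]]]].
rewrite !coordZ !coordE mulr1.
have [z_le1 top] := C_under_top_disk Cc.
split=> [||z23] //; first by rewrite ler_piMr.
have [->|l_neq0] := eqVneq l 0; first by rewrite !mul0r expr0n addr0.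
have c_top : c ord0 k2 = 1 by apply: (mulfI l_neq0); rewrite mulr1.
by rewrite !exprMn -mulrDr ler_piMr ?sqr_ge0 ?top.
Qed.

Definition top_face : set 'rV[R]_4 := [set y | y ord0 i2 = y ord0 i3 /\
  y ord0 i0 ^+ 2 + y ord0 i1 ^+ 2 <= y ord0 i3 ^+ 2 /\ 0 <= y ord0 i3].

Lemma top_face0 : top_face 0.
Proof. by rewrite /top_face /= !mxE expr0n addr0. Qed.

Lemma closed_top_face : closed top_face.
Proof.
pose coord j (y : 'rV[R]_4) := y ord0 j.
have coord_cont j : continuous (coord j) by move=> y; exact: coord_continuous.
have sqr_cont j : continuous (fun y : 'rV[R]_4 => y ord0 j ^+ 2).
  by move=> y; exact: continuousM (coord_cont j y) (coord_cont j y).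
apply: closedI; first exact: closed_eq_fun (coord_cont i2) (coord_cont i3).
apply: closedI; last by apply: closed_le_fun (coord_cont i3) => y; exact: cst_continuous.
apply: closed_le_fun (sqr_cont i3) => y.
exact: continuousD (sqr_cont i0 y) (sqr_cont i1 y).
Qed.

Lemma top_face_convex : convex_set_of top_face.
Proof.
move=> x y a [x23 [x_disk x3_ge0]] [y23 [y_disk y3_ge0]] /andP[a_ge0 a_le1].
rewrite /top_face /= !coordD !coordZ x23 y23; split=> //.
have b_ge0 : 0 <= 1 - a by rewrite subr_ge0.
by split; [exact: lorentz_cone_convex | rewrite addr_ge0 ?mulr_ge0].
Qed.

Lemma top_face_extreme x y (a : R) : @K_cone R x -> @K_cone R y -> 0 < a < 1 ->
  top_face (a *: x + (1 - a) *: y) -> top_face x /\ top_face y.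
Proof.
move=> /K_cone_top_bound[x23 x3_ge0 x_disk] /K_cone_top_bound[y23 y3_ge0 y_disk].
move=> /andP[a_gt0 a_lt1] []; rewrite !coordD !coordZ => eq23 _.
have x_eq : x ord0 i2 = x ord0 i3 by nra.
have y_eq : y ord0 i2 = y ord0 i3 by nra.
by split; split=> //; split=> //; [exact: x_disk | exact: y_disk].
Qed.

Lemma top_face_sub_cone : top_face `<=` @K_cone R.
Proof.
move=> y [y23 [y_disk y3_ge0]].
set s := y ord0 i3 in y23 y_disk y3_ge0.
have y01_0 : s = 0 -> y ord0 i0 = 0 /\ y ord0 i1 = 0.
  move=> s0; move: y_disk; rewrite s0 expr0n /=.
  by have := sqr_ge0 (y ord0 i0); have := sqr_ge0 (y ord0 i1); split; nra.
have mul_div a : (s = 0 -> a = 0) -> s * (a / s) = a.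
  by have [s0 /(_ s0) ->|s_neq0 _] := eqVneq s 0; rewrite ?s0 ?mul0r // mulrC divfK.
exists s, (hom (vec3 (y ord0 i0 / s) (y ord0 i1 / s) 1)); split=> //; split.
  exists (vec3 (y ord0 i0 / s) (y ord0 i1 / s) 1) => //; apply: top_disk_sub_C.
  rewrite !expr_div_n -mulrDl; have [s0|s_neq0] := eqVneq s 0.
    by rewrite s0 expr0n invr0 mulr0.
  by rewrite ler_pdivrMr ?mul1r // exprn_gt0 // lt_def s_neq0.
apply/rowP => j; rewrite coordZ.
case: (ord4_cases j) => ->; rewrite !coordE ?mulr1 //.
- by rewrite mul_div // => /y01_0[].
- by rewrite mul_div // => /y01_0[].
Qed.

Lemma is_face_top_face : is_face (@K_cone R) top_face.
Proof.
split; first by exists 0; exact: top_face0.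
split; first exact: top_face_sub_cone.
split; first exact: closed_top_face.
split; first exact: top_face_convex.
exact: top_face_extreme.
Qed.

Lemma span_top_face y : y ord0 i2 = y ord0 i3 -> Defs.span top_face y.
Proof.
move=> y23.
pose e := [:: hom (vec3 1 0 1); hom (vec3 0 1 1); hom (vec3 0 0 1)].
pose coef := [:: y ord0 i0; y ord0 i1; y ord0 i3 - y ord0 i0 - y ord0 i1].
exists 3%N, (fun i : 'I_3 => e`_i), (fun i : 'I_3 => coef`_i); split.
  move=> i; case: (nat_of_ord i) (ltn_ord i) => [|[|[|//]]] _;
    rewrite /top_face /= !coordE expr1n expr0n /=; by split; [|split]; lra.
rewrite !big_ord_recr big_ord0 /= add0r.
by apply/rowP => j; case: (ord4_cases j) => ->; rewrite !coordD !coordZ !coordE ?y23; ring.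
Qed.

Definition gamma_top t : 'rV[R]_4 := hom (vec3 (gamma t ord0 k0) (gamma t ord0 k1) 1).

Lemma span_gamma_top t : Defs.span top_face (gamma_top t).
Proof. by apply: span_top_face; rewrite !coordE. Qed.

Lemma edist_gamma_top_cone t : t \in `[0, pi] ->
  Defs.edist (gamma_top t) (@K_cone R) <= (1 - cos t) ^+ 2 * (2 + cos t) / 2.
Proof.
move=> t_range.
have K_gamma : @K_cone R (hom (gamma t)).
  apply: sub_cone; exists (gamma t) => //; apply: sub_conv; right; exists t => //.
apply: le_trans (edist_le_enorm _ K_gamma) _.
rewrite enorm4 !coordB !(hom_0, hom_1, hom_2, hom_3) vec3_0 vec3_1 vec3_2.
rewrite !subrr expr0n /= !add0r addr0 sqrtr_sqr.
have [z_le1 _] := gamma_under_top_disk t.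
by rewrite ger0_norm ?subr_ge0 // one_sub_gamma_z.
Qed.

(* The functional y |-> u1 y_0 + u2 y_1 - y_3 is nonpositive on the face and
   equals 2 h at (a, b, 1, 1). *)
Lemma top_face_dist_ge (u1 u2 a b h : R) y : u1 ^+ 2 + u2 ^+ 2 = 1 -> 0 <= h ->
  u1 * a + u2 * b = 1 + 2 * h -> top_face y -> h <= enorm (hom (vec3 a b 1) - y).
Proof.
move=> u_unit h_ge0 u_ab [y23 [y_disk y3_ge0]].
rewrite enorm4 !coordB !coordE y23; apply: ler_sqrt_of_sqr => //.
set p := y ord0 i0 in y_disk *; set q := y ord0 i1 in y_disk *.
set r := y ord0 i3 in y_disk y3_ge0 *.
have u_pq : u1 * p + u2 * q <= r.
  apply: ler_of_sqr => //; apply: le_trans (cauchy_schwarz2 u1 u2 p q) _.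
  by rewrite u_unit mul1r.
set L := u1 * (a - p) + u2 * (b - q).
have L_sqr : L ^+ 2 <= (a - p) ^+ 2 + (b - q) ^+ 2.
  by have := cauchy_schwarz2 u1 u2 (a - p) (b - q); rewrite u_unit mul1r.
have L_gap : 2 * h <= L - (1 - r).
  have -> : L = u1 * a + u2 * b - (u1 * p + u2 * q) by rewrite /L; ring.
  by rewrite u_ab; lra.
have : (2 * h) ^+ 2 <= (L - (1 - r)) ^+ 2 by rewrite ler_pXn2r // ?nnegrE; lra.
by have := sqr_ge0 (L + (1 - r)); have := sqr_ge0 h; nra.
Qed.

Lemma edist_gamma_top_face t : sin t ^+ 2 <= Defs.edist (gamma_top t) top_face.
Proof.
apply: le_edist; first by exists 0; exact: top_face0.
move=> y face_y; apply: (top_face_dist_ge (u1 := 2 * cos t ^+ 2 - 1)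
  (u2 := 2 * sin t * cos t)) face_y; first by rewrite !exprMn sin2cos2; ring.
  exact: sqr_ge0.
rewrite gammaE vec3_0 vec3_1.
have -> : (2 * cos t ^+ 2 - 1) * (4 * cos t ^+ 2 - 3) + 2 * sin t * cos t * (4 * sin t * cos t)
    = (2 * cos t ^+ 2 - 1) * (4 * cos t ^+ 2 - 3) + 8 * cos t ^+ 2 * sin t ^+ 2 by ring.
by rewrite sin2cos2; ring.
Qed.

Lemma gamma_top_gap (kappa : R) : 0 < kappa ->
  exists2 t : R, t \in `[0, pi] & kappa * ((1 - cos t) ^+ 2 * (2 + cos t) / 2) < sin t ^+ 2.
Proof.
move=> kappa_gt0; set d := (kappa + 2)^-1.
have d_gt0 : 0 < d by rewrite invr_gt0; lra.
have kappa_d : kappa * d < 1 by rewrite ltr_pdivrMr; lra.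
have d_lt1 : d < 1 by rewrite invf_lt1; lra.
have c_bound : -1 <= 1 - d <= 1 by apply/andP; split; lra.
have [t_range cos_t] := acos_def c_bound.
exists (acos (1 - d)); first by rewrite in_itv.
(* With cos t = 1 - d the claim reads kappa d^2 (3 - d) / 2 < d (2 - d). *)
rewrite sin2cos2 cos_t.
have : kappa * d * (d * (3 - d)) < d * (3 - d) by rewrite gtr_pMl // mulr_gt0 //; lra.
have : 0 <= d * (1 - d) by apply: mulr_ge0; lra.
lra.
Qed.
End TopFace.

Theorem proposition5p2 (R : realType) : ~ amenable (@K_cone R).
Proof.
apply: (not_amenable_of_face_gap (is_face_top_face R)) => kappa kappa_gt0.
have [t t_range gap] := gamma_top_gap kappa_gt0.
exists (gamma_top t); first exact: span_gamma_top.
apply: le_lt_trans (ler_wpM2l (ltW kappa_gt0) (edist_gamma_top_cone t_range)) _.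
exact: lt_le_trans gap (edist_gamma_top_face t).
Qed.
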